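(* Let $\mu>-\tfrac12$ and $\xi,\alpha\in\mathbb{R}$. Then, for all real $t$, $$\text{(i)}\quad \sum_{n=0}^{\infty}\frac{h_{n+1}^{\mu}(\xi,\alpha)}{\gamma_{\mu}(n)}t^{n}=(\xi+2\alpha t)\,e^{\alpha t^{2}}e_{\mu}(\xi t),$$ $$\text{(ii)}\quad \sum_{n=0}^{\infty}\frac{h_{n+2}^{\mu}(\xi,\alpha)}{\gamma_{\mu}(n)}t^{n}=(\xi^{2}+4\xi\alpha t+4\alpha^{2}t^{2}+2\alpha)\,e^{\alpha t^{2}}e_{\mu}(\xi t)+4\alpha\mu\, e^{\alpha t^{2}}e_{\mu}(-\xi t).$$
   Context: For $\mu>-\tfrac12$ define $\gamma_\mu(2k)=\dfrac{2^{2k}k!\,\Gamma(k+\mu+1/2)}{\Gamma(\mu+1/2)}$ and $\gamma_\mu(2k+1)=\dfrac{2^{2k+1}k!\,\Gamma(k+\mu+3/2)}{\Gamma(\mu+1/2)}$ for $k\in\{0,1,2,\dots\}$. The Dunkl analogue of the exponential is $e_\mu(x)=\sum_{k=0}^\infty \dfrac{x^k}{\gamma_\mu(k)}$. The polynomials $h_n^\mu(\xi,\alpha)$ are defined by $$h_n^\mu(\xi,\alpha)=\gamma_\mu(n)\sum_{k=0}^{\lfloor n/2\rfloor}\frac{\alpha^k\xi^{n-2k}}{k!\,\gamma_\mu(n-2k)},$$ equivalently by the generating function $\sum_{n=0}^\infty \dfrac{h_n^\mu(\xi,\alpha)}{\gamma_\mu(n)}t^n=e^{\alpha t^2}e_\mu(\xi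 t)$. *)

From Stdlib Require Import Reals Arith.
From Coquelicot Require Import Coquelicot.
Open Scope R_scope.

(* Rising factorial (Pochhammer symbol): poch a k = a (a+1) ... (a+k-1)
   = Gamma(a+k)/Gamma(a) for a > 0. *)
Fixpoint poch (a : R) (k : nat) : R :=
  match k with
  | O => 1
  | S k' => poch a k' * (a + INR k')
  end.

(* gamma_mu(2k)   = 2^(2k)   k! Gamma(k+mu+1/2)/Gamma(mu+1/2)
   gamma_mu(2k+1) = 2^(2k+1) k! Gamma(k+mu+3/2)/Gamma(mu+1/2) *)
Definition gamma_mu (mu : R) (n : nat) : R :=
  let k := Nat.div2 n in
  if Nat.even n
  then 2 ^ n * INR (fact k) * poch (mu + /2) k
  else 2 ^ n * INR (fact k) * poch (mu + /2) (S k).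

Definition e_mu (mu x : R) : R :=
  Series (fun k => x ^ k / gamma_mu mu k).

Definition h_mu (mu : R) (n : nat) (xi alpha : R) : R :=
  gamma_mu mu n *
  sum_f_R0 (fun k => alpha ^ k * xi ^ (n - 2 * k)
                     / (INR (fact k) * gamma_mu mu (n - 2 * k)))
           (Nat.div2 n).

From Stdlib Require Import Reals Arith Lia Lra.
From Coquelicot Require Import Coquelicot.
Open Scope R_scope.

(* Write r n = n + 1 + 2 mu [n even], so that gamma_mu (n+1) = r n * gamma_mu n, and
   c n = h_n / gamma_mu n.  The Cauchy product of exp (alpha t^2) and e_mu (xi t) shows
   that the c n are the Taylor coefficients of the generating function, and comparing
   terms gives the three-term recurrence r (n+1) c (n+2) = xi c (n+1) + 2 alpha c n.
   Hence h_(n+1) / gamma_mu n = r n c (n+1) has generating function (xi + 2 alpha t) times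
   that of c, which is (i), and h_(n+2) / gamma_mu n = r n (xi c (n+1) + 2 alpha c n)
   reduces (ii) to (i) and to the series of r n c n t^n, whose parity term produces
   e_mu (- xi t). *)

Lemma even_double (k : nat) : Nat.even (2 * k) = true.
Proof. now rewrite Nat.even_mul. Qed.

Lemma even_succ_double (k : nat) : Nat.even (S (2 * k)) = false.
Proof. now rewrite Nat.even_succ, Nat.odd_even. Qed.

Definition gamma_mu_ratio (mu : R) (n : nat) : R :=
  INR n + 1 + (if Nat.even n then 2 * mu else 0).

Lemma gamma_mu_0 (mu : R) : gamma_mu mu 0 = 1.
Proof. unfold gamma_mu; simpl; ring. Qed.

Lemma gamma_mu_double (mu : R) (k : nat) :
  gamma_mu mu (2 * k) = 2 ^ (2 * k) * INR (fact k) * poch (mu + /2) k.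
Proof. unfold gamma_mu; cbv zeta. now rewrite even_double, Nat.div2_double. Qed.

Lemma gamma_mu_succ_double (mu : R) (k : nat) :
  gamma_mu mu (S (2 * k)) = 2 ^ S (2 * k) * INR (fact k) * poch (mu + /2) (S k).
Proof. unfold gamma_mu; cbv zeta. now rewrite even_succ_double, Nat.div2_succ_double. Qed.

Lemma gamma_mu_S (mu : R) (n : nat) :
  gamma_mu mu (S n) = gamma_mu mu n * gamma_mu_ratio mu n.
Proof.
  unfold gamma_mu_ratio.
  destruct (Nat.Even_or_Odd n) as [[k ->] | [k ->]].
  - rewrite gamma_mu_succ_double, gamma_mu_double, even_double, mult_INR; simpl poch.
    simpl pow; simpl INR; field.
  - replace (S (2 * k + 1)) with (2 * S k)%nat by lia.
    rewrite Nat.add_1_r, gamma_mu_double, gamma_mu_succ_double, even_succ_double.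
    rewrite fact_simpl, !mult_INR, !S_INR, mult_INR.
    replace (2 * S k)%nat with (S (S (2 * k))) by lia.
    simpl pow; simpl INR; ring.
Qed.

Lemma gamma_mu_ratio_add_double (mu : R) (k m : nat) :
  gamma_mu_ratio mu (m + 2 * k) = 2 * INR k + gamma_mu_ratio mu m.
Proof.
  unfold gamma_mu_ratio. rewrite Nat.even_add_mul_2, plus_INR, mult_INR.
  simpl INR; ring.
Qed.

Lemma gamma_mu_ratio_S (mu : R) (n : nat) :
  gamma_mu_ratio mu (S n) = gamma_mu_ratio mu n + 1 + 2 * mu * (-1) ^ S n.
Proof.
  unfold gamma_mu_ratio. rewrite S_INR.
  destruct (Nat.Even_or_Odd n) as [[k ->] | [k ->]].
  - rewrite pow_1_odd, even_succ_double, even_double; ring.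
  - replace (S (2 * k + 1)) with (2 * S k)%nat by lia.
    rewrite pow_1_even, even_double, Nat.add_1_r, even_succ_double; ring.
Qed.

Lemma exp_is_series (y : R) : is_series (fun k => y ^ k / INR (fact k)) (exp y).
Proof.
  eapply is_series_ext; [| apply (is_exp_Reals y)].
  intros n. unfold scal; simpl. unfold mult; simpl. rewrite pow_n_pow. unfold Rdiv. ring.
Qed.

Section DunklExponential.

Variable mu : R.
Hypothesis hmu : - / 2 < mu.

Lemma gamma_mu_ratio_pos (n : nat) : 0 < gamma_mu_ratio mu n.
Proof.
  unfold gamma_mu_ratio. pose proof (pos_INR n). destruct (Nat.even n); lra.
Qed.

Lemma gamma_mu_pos (n : nat) : 0 < gamma_mu mu n.
Proof.
  induction n as [| n IH].
  - rewrite gamma_mu_0; lra.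
  - rewrite gamma_mu_S. pose proof (gamma_mu_ratio_pos n). nra.
Qed.

Lemma gamma_mu_ge_fact (n : nat) :
  Rmin 1 (1 + 2 * mu) ^ n * INR (fact n) <= gamma_mu mu n.
Proof.
  set (s := Rmin 1 (1 + 2 * mu)).
  assert (hs1 : s <= 1) by apply Rmin_l.
  assert (hs2 : s <= 1 + 2 * mu) by apply Rmin_r.
  assert (hs0 : 0 < s) by (apply Rmin_glb_lt; lra).
  induction n as [| n IH].
  - rewrite gamma_mu_0; simpl; lra.
  - assert (hratio : s * INR (S n) <= gamma_mu_ratio mu n).
    { unfold gamma_mu_ratio. rewrite S_INR. pose proof (pos_INR n).
      destruct (Nat.even n); nra. }
    rewrite gamma_mu_S, fact_simpl, mult_INR.
    replace (s ^ S n * (INR (S n) * INR (fact n)))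
      with (s ^ n * INR (fact n) * (s * INR (S n))) by (simpl; ring).
    pose proof (pos_INR (fact n)). pose proof (pos_INR (S n)).
    pose proof (pow_lt s n hs0).
    apply Rmult_le_compat; nra.
Qed.

Lemma ex_series_abs_e_mu (x : R) :
  ex_series (fun k => Rabs (x ^ k / gamma_mu mu k)).
Proof.
  set (s := Rmin 1 (1 + 2 * mu)).
  assert (hs0 : 0 < s) by (apply Rmin_glb_lt; lra).
  apply (@ex_series_le R_AbsRing R_CompleteNormedModule _
           (fun k => (Rabs x / s) ^ k / INR (fact k))).
  - intros k. change (norm ?y) with (Rabs y). rewrite Rabs_Rabsolu.
    pose proof (gamma_mu_pos k). pose proof (gamma_mu_ge_fact k) as hge.
    pose proof (INR_fact_lt_0 k). pose proof (pow_lt s k hs0).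
    unfold Rdiv. rewrite Rabs_mult, Rabs_inv, <- RPow_abs, (Rabs_right (gamma_mu mu k)) by lra.
    rewrite Rpow_mult_distr, pow_inv.
    replace (Rabs x ^ k * / s ^ k * / INR (fact k))
      with (Rabs x ^ k * / (s ^ k * INR (fact k))) by (field; lra).
    apply Rmult_le_compat_l; [apply pow_le, Rabs_pos |].
    apply Rinv_le_contravar; [nra | exact hge].
  - eexists. apply exp_is_series.
Qed.

Lemma e_mu_is_series (x : R) :
  is_series (fun k => x ^ k / gamma_mu mu k) (e_mu mu x).
Proof. apply Series_correct, ex_series_Rabs, ex_series_abs_e_mu. Qed.

End DunklExponential.

Definition spread_even (v : nat -> R) (j : nat) : R :=
  if Nat.even j then v (Nat.div2 j) else 0.

Lemma sum_spread_even (v : nat -> R) (n : nat) :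
  sum_f_R0 (spread_even v) n = sum_f_R0 v (Nat.div2 n).
Proof.
  induction n as [| n IH]; [reflexivity |].
  rewrite tech5, IH. unfold spread_even.
  destruct (Nat.Even_or_Odd n) as [[k ->] | [k ->]].
  - rewrite even_succ_double, Nat.div2_succ_double, Nat.div2_double; ring.
  - replace (S (2 * k + 1)) with (2 * S k)%nat by lia.
    rewrite Nat.add_1_r, even_double, Nat.div2_double, Nat.div2_succ_double, tech5.
    reflexivity.
Qed.

Lemma spread_even_is_series (v : nat -> R) (l : R) :
  is_series v l -> is_series (spread_even v) l.
Proof.
  rewrite !is_series_Reals. intros hv eps heps.
  destruct (hv eps heps) as [N hN]. exists (2 * N)%nat. intros n hn.
  rewrite sum_spread_even. apply hN.
  pose proof (Nat.div2_odd n). destruct (Nat.odd n); simpl Nat.b2n in *; lia.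
Qed.

Lemma spread_even_abs (v : nat -> R) (j : nat) :
  Rabs (spread_even v j) = spread_even (fun k => Rabs (v k)) j.
Proof. unfold spread_even. destruct (Nat.even j); [reflexivity | apply Rabs_R0]. Qed.

Lemma exp_ex_series_abs (y : R) : ex_series (fun k => Rabs (y ^ k / INR (fact k))).
Proof.
  exists (exp (Rabs y)). eapply is_series_ext; [| apply exp_is_series].
  intros k. unfold Rdiv. rewrite Rabs_mult, RPow_abs, Rabs_inv, (Rabs_right (INR _)); [reflexivity |].
  apply Rle_ge, pos_INR.
Qed.

Lemma double_div2_of_even (j : nat) : Nat.even j = true -> j = (2 * Nat.div2 j)%nat.
Proof.
  intros hj. rewrite (Nat.div2_odd j) at 1. rewrite <- Nat.negb_even, hj. simpl; lia.
Qed.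

Lemma div2_bounds (n : nat) : (2 * Nat.div2 n <= n <= S (2 * Nat.div2 n))%nat.
Proof. pose proof (Nat.div2_odd n). destruct (Nat.odd n); simpl Nat.b2n in *; lia. Qed.

Section HermiteCoefficients.

Variables mu xi alpha : R.
Hypothesis hmu : - / 2 < mu.

Definition h_term (k m : nat) : R :=
  alpha ^ k * xi ^ m / (INR (fact k) * gamma_mu mu m).

Definition h_coef (n : nat) : R :=
  sum_f_R0 (fun k => h_term k (n - 2 * k)) (Nat.div2 n).

Lemma h_mu_coef (n : nat) : h_mu mu n xi alpha = gamma_mu mu n * h_coef n.
Proof. reflexivity. Qed.

Lemma h_term_S_right (k m : nat) :
  gamma_mu_ratio mu m * h_term k (S m) = xi * h_term k m.
Proof.
  unfold h_term. rewrite gamma_mu_S.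
  pose proof (gamma_mu_pos mu hmu m). pose proof (gamma_mu_ratio_pos mu hmu m).
  pose proof (INR_fact_lt_0 k). simpl pow. field. lra.
Qed.

Lemma h_term_S_left (k m : nat) : INR (S k) * h_term (S k) m = alpha * h_term k m.
Proof.
  unfold h_term. rewrite fact_simpl, mult_INR.
  pose proof (gamma_mu_pos mu hmu m). pose proof (INR_fact_lt_0 k). pose proof (pos_INR k).
  rewrite S_INR. simpl pow. field. lra.
Qed.

(* Padding with zeros lets the three sums of the recurrence run over one common range. *)
Definition h_term_padded (n k : nat) : R :=
  if (2 * k <=? n)%nat then h_term k (n - 2 * k) else 0.

Lemma h_term_padded_le (n k : nat) :
  (2 * k <= n)%nat -> h_term_padded n k = h_term k (n - 2 * k).
Proof. intros h. unfold h_term_padded. now rewrite (proj2 (Nat.leb_le _ _) h). Qed.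

Lemma h_term_padded_gt (n k : nat) : (n < 2 * k)%nat -> h_term_padded n k = 0.
Proof. intros h. unfold h_term_padded. now rewrite (proj2 (Nat.leb_gt _ _) h). Qed.

Lemma h_coef_padded (n N : nat) :
  (Nat.div2 n <= N)%nat -> h_coef n = sum_f_R0 (h_term_padded n) N.
Proof.
  pose proof (div2_bounds n).
  induction 1 as [| N hN IH].
  - apply sum_eq. intros k hk. symmetry. apply h_term_padded_le. lia.
  - rewrite tech5, <- IH, h_term_padded_gt by lia. ring.
Qed.

Lemma h_term_padded_rec_0 (n : nat) :
  gamma_mu_ratio mu (S n) * h_term_padded (S (S n)) 0 = xi * h_term_padded (S n) 0.
Proof. rewrite !h_term_padded_le by lia. apply h_term_S_right. Qed.

Lemma h_term_padded_rec_S (n k : nat) :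
  gamma_mu_ratio mu (S n) * h_term_padded (S (S n)) (S k)
  = xi * h_term_padded (S n) (S k) + 2 * alpha * h_term_padded n k.
Proof.
  destruct (lt_eq_lt_dec n (2 * k)) as [[hlt | ->] | hgt].
  - rewrite !h_term_padded_gt by lia. ring.
  - rewrite (h_term_padded_gt (S (2 * k)) (S k)), !h_term_padded_le by lia.
    replace (S (S (2 * k)) - 2 * S k)%nat with 0%nat by lia.
    rewrite Nat.sub_diag, Rmult_assoc, <- h_term_S_left.
    unfold gamma_mu_ratio. rewrite even_succ_double, !S_INR, mult_INR. simpl INR. ring.
  - destruct (Nat.le_exists_sub (S (2 * k)) n hgt) as [m [hn _]].
    rewrite !h_term_padded_le by lia.
    replace (S n) with (m + 2 * S k)%nat by lia.
    replace (S (m + 2 * S k) - 2 * S k)%nat with (S m) by lia.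
    replace (m + 2 * S k - 2 * S k)%nat with m by lia.
    replace (n - 2 * k)%nat with (S m) by lia.
    rewrite gamma_mu_ratio_add_double, Rmult_plus_distr_r, h_term_S_right, Rmult_assoc, h_term_S_left.
    ring.
Qed.

Lemma h_coef_rec (n : nat) :
  gamma_mu_ratio mu (S n) * h_coef (S (S n)) = xi * h_coef (S n) + 2 * alpha * h_coef n.
Proof.
  pose proof (div2_bounds n). pose proof (div2_bounds (S n)). pose proof (div2_bounds (S (S n))).
  rewrite (h_coef_padded (S (S n)) (S (S n))), (h_coef_padded (S n) (S (S n))),
    (h_coef_padded n (S n)) by lia.
  rewrite !(decomp_sum _ (S (S n))) by lia. simpl Init.Nat.pred.
  rewrite Rmult_plus_distr_l, h_term_padded_rec_0, Rmult_plus_distr_l, Rplus_assoc.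
  f_equal. rewrite !scal_sum, <- sum_plus. apply sum_eq. intros k _.
  rewrite Rmult_comm, h_term_padded_rec_S. ring.
Qed.

Lemma h_coef_1 : gamma_mu_ratio mu 0 * h_coef 1 = xi * h_coef 0.
Proof. exact (h_term_S_right 0 0). Qed.

End HermiteCoefficients.

Lemma h_coef_is_series (mu xi alpha t : R) : - / 2 < mu ->
  is_series (fun n => h_coef mu xi alpha n * t ^ n)
    (exp (alpha * t ^ 2) * e_mu mu (xi * t)).
Proof.
  intros hmu.
  set (a := fun k => (alpha * t ^ 2) ^ k / INR (fact k)).
  set (b := fun m => (xi * t) ^ m / gamma_mu mu m).
  assert (habs_a : ex_series (fun j => Rabs (spread_even a j))).
  { destruct (exp_ex_series_abs (alpha * t ^ 2)) as [l hl].
    exists l. eapply is_series_ext; [| exact (spread_even_is_series _ _ hl)].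
    intros j. symmetry. apply spread_even_abs. }
  pose proof (is_series_mult (spread_even a) b _ _
    (spread_even_is_series _ _ (exp_is_series _)) (e_mu_is_series mu hmu _)
    habs_a (ex_series_abs_e_mu mu hmu _)) as hcauchy.
  eapply is_series_ext; [| exact hcauchy]. intros n. simpl.
  rewrite (sum_eq _ (spread_even (fun k => a k * b (n - 2 * k)%nat))).
  2:{ intros j _. unfold spread_even. destruct (Nat.even j) eqn:hj; [| ring].
      now rewrite <- (double_div2_of_even j hj). }
  rewrite sum_spread_even. unfold h_coef. rewrite Rmult_comm, scal_sum.
  apply sum_eq. intros k hk. pose proof (div2_bounds n).
  replace (t ^ n) with ((t ^ 2) ^ k * t ^ (n - 2 * k))
    by (rewrite <- pow_mult, <- pow_add; f_equal; lia).
  unfold h_term, a, b. rewrite !Rpow_mult_distr.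
  pose proof (gamma_mu_pos mu hmu (n - 2 * k)). pose proof (INR_fact_lt_0 k).
  field. lra.
Qed.

Lemma is_series_shift_right (a : nat -> R) (l : R) :
  is_series a l -> is_series (fun n => match n with 0%nat => 0 | S m => a m end) l.
Proof.
  intros ha. apply is_series_decr_1.
  match goal with |- is_series _ ?s => replace s with l by (unfold plus, opp; simpl; ring) end.
  exact ha.
Qed.

Section GeneratingFunctions.

Variables mu xi alpha t : R.
Hypothesis hmu : - / 2 < mu.

Let c := h_coef mu xi alpha.
Let F := exp (alpha * t ^ 2) * e_mu mu (xi * t).
Let F_reflected := exp (alpha * t ^ 2) * e_mu mu (- (xi * t)).

Lemma h_coef_shift_is_series :
  is_series (fun n => gamma_mu_ratio mu n * c (S n) * t ^ n) ((xi + 2 * alpha * t) * F).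
Proof.
  pose proof (h_coef_is_series mu xi alpha t hmu) as hF.
  replace ((xi + 2 * alpha * t) * F) with (xi * F + 2 * alpha * t * F) by ring.
  eapply is_series_ext;
    [| apply (is_series_plus _ _ _ _ (is_series_scal_l xi _ _ hF)
                (is_series_shift_right _ _ (is_series_scal_l (2 * alpha * t) _ _ hF)))].
  intros [| n]; unfold c, plus, scal; simpl; unfold mult; simpl.
  - rewrite h_coef_1 by exact hmu. ring.
  - rewrite <- Rmult_assoc, h_coef_rec by exact hmu. ring.
Qed.

(* As gamma_mu_ratio (S n) = gamma_mu_ratio n + 1 + 2 mu (-1)^(S n), the parity
   correction is the generating function evaluated at [-t]. *)
Lemma h_coef_ratio_is_series :
  is_series (fun n => gamma_mu_ratio mu n * c n * t ^ n)
    (F + 2 * mu * F_reflected + t * ((xi + 2 * alpha * t) * F)).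
Proof.
  pose proof (h_coef_is_series mu xi alpha t hmu) as hF.
  assert (hFr : is_series (fun n => c n * (- t) ^ n) F_reflected).
  { unfold F_reflected. replace (alpha * t ^ 2) with (alpha * (- t) ^ 2) by ring.
    replace (- (xi * t)) with (xi * - t) by ring.
    exact (h_coef_is_series mu xi alpha (- t) hmu). }
  eapply is_series_ext;
    [| apply (is_series_plus _ _ _ _
                (is_series_plus _ _ _ _ hF (is_series_scal_l (2 * mu) _ _ hFr))
                (is_series_shift_right _ _ (is_series_scal_l t _ _ h_coef_shift_is_series)))].
  intros [| n]; unfold c, plus, scal; simpl; unfold mult; simpl.
  - unfold gamma_mu_ratio. simpl. ring.
  - rewrite gamma_mu_ratio_S.
    replace (- t * (- t) ^ n) with ((-1) ^ S n * (t * t ^ n))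
      by (change (t * t ^ n) with (t ^ S n); rewrite <- Rpow_mult_distr;
          now replace (-1 * t) with (- t) by ring).
    ring.
Qed.

End GeneratingFunctions.

Theorem lemma2 (mu xi alpha : R) (hmu : - / 2 < mu) (t : R) :
  is_series (fun n => h_mu mu (n + 1) xi alpha / gamma_mu mu n * t ^ n)
    ((xi + 2 * alpha * t) * exp (alpha * t ^ 2) * e_mu mu (xi * t))
  /\
  is_series (fun n => h_mu mu (n + 2) xi alpha / gamma_mu mu n * t ^ n)
    ((xi ^ 2 + 4 * xi * alpha * t + 4 * alpha ^ 2 * t ^ 2 + 2 * alpha)
       * exp (alpha * t ^ 2) * e_mu mu (xi * t)
     + 4 * alpha * mu * exp (alpha * t ^ 2) * e_mu mu (- (xi * t))).
Proof.
  pose proof (h_coef_shift_is_series mu xi alpha t hmu) as hshift.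
  pose proof (h_coef_ratio_is_series mu xi alpha t hmu) as hratio.
  set (F := exp (alpha * t ^ 2) * e_mu mu (xi * t)) in hshift, hratio.
  set (F_reflected := exp (alpha * t ^ 2) * e_mu mu (- (xi * t))) in hratio.
  split.
  - rewrite Rmult_assoc. eapply is_series_ext; [| exact hshift].
    intros n. simpl. rewrite h_mu_coef, Nat.add_1_r, gamma_mu_S.
    pose proof (gamma_mu_pos mu hmu n). field. lra.
  - match goal with |- is_series _ ?l =>
      replace l with (xi * ((xi + 2 * alpha * t) * F)
                      + 2 * alpha * (F + 2 * mu * F_reflected + t * ((xi + 2 * alpha * t) * F)))
        by (unfold F, F_reflected; ring) end.
    eapply is_series_ext;
      [| exact (is_series_plus _ _ _ _ (is_series_scal_l xi _ _ hshift)
                  (is_series_scal_l (2 * alpha) _ _ hratio))].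
    intros n. unfold plus, scal; simpl; unfold mult; simpl.
    rewrite h_mu_coef, Nat.add_succ_r, Nat.add_1_r, !gamma_mu_S.
    replace (gamma_mu mu n * gamma_mu_ratio mu n * gamma_mu_ratio mu (S n)
               * h_coef mu xi alpha (S (S n)))
      with (gamma_mu mu n * gamma_mu_ratio mu n
              * (gamma_mu_ratio mu (S n) * h_coef mu xi alpha (S (S n)))) by ring.
    rewrite h_coef_rec by exact hmu.
    pose proof (gamma_mu_pos mu hmu n). field. lra.
Qed.
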